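(* Assume the setting in the context. For an integer $r\ge1$, if the $r$th central moment of $\hat\theta_i(z,\omega)$ exists, then \[ \mathbb E\bigl|\hat\theta_i(z,\omega)-\theta_i(\tilde y_i)\bigr|^r\le\bigl(2\|\tilde y_i\|_p\|\psi_i\|_q\bigr)^r \] for any $p,q\in[1,\infty]$ with $1/p+1/q=1/r$. In particular, for $r=2$, \[ \mathbb E\bigl[\hat\theta_i(z,\omega)-\theta_i(\tilde y_i)\bigr]^2\le\|\tilde y_i\|_p^2\|\psi_i\|_q^2 \] for any $p,q\in[1,\infty]$ with $1/p+1/q=1/2$. (These inequalities hold trivially if $\|\tilde y_i\|_p$ or $\|\psi_i\|_q$ is infinite.)
   Context: Let $(\Omega,\mathcal F,P)$ be a probability space (latent environment) and $\mathcal Z$ a measurable space of treatment assignments with a known randomisation probability measure $\mu$. The potential outcome of unit $i$ is a measurable map $\tilde y_i:\mathcal Z\times\Omega\to\mathbb R$ of the form $\tilde y_i(z,\omega)=y_i(z,x_i(\omega),\epsilon_i(\omega))$ with $y_i,x_i,\epsilon_i$ measurable. For $p\ge1$, $\|u\|_p=(\int|u(z,\omega)|^p\mu(\mathrm dz)P(\mathrm d\omega))^{1/p}$ (with the essential supremum for $p=\infty$); $\mathbb E$ denotes expectation with respect to $\mu(\mathrm dz)P(\mathrm d\omega)$. $\tilde y_i$ lies in a model space $\mathcal M_i\subset L^2(\mathcal Z\times\Omega)$ (taken closed) with inner product $\langle u,v\rangle=\mathbb E[uv]$. The treatment effect $\theta_i$ is a continuous linear functional on $\mathcal M_i$ with Riesz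 representer $\psi_i\in\mathcal M_i$, i.e. $\theta_i(u)=\langle u,\psi_i\rangle$ for all $u\in\mathcal M_i$. The Riesz estimator is $\hat\theta_i(z,\omega)=\tilde y_i(z,\omega)\psi_i(z,\omega)$. *)

From HB Require Import structures.
From mathcomp Require Import all_boot all_order all_algebra.
From mathcomp Require Import all_classical all_reals all_analysis.
Set Implicit Arguments. Unset Strict Implicit. Unset Printing Implicit Defensive.
Import Order.TTheory GRing.Theory Num.Theory.
Import numFieldNormedType.Exports.
Local Open Scope classical_set_scope.
Local Open Scope ring_scope.

Section Defs.
Context d {T : measurableType d} {R : realType}.
Variable m : {measure set T -> \bar R}.

Definition square_integrable (f : T -> R) : Prop :=
  measurable_fun setT f /\ (Lnorm m 2%:E (EFin \o f) < +oo)%E.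

Definition L2dist (f g : T -> R) : \bar R := Lnorm m 2%:E (EFin \o (f \- g)).

Definition closed_L2_subspace (M : set (T -> R)) : Prop :=
  [/\ (forall f, M f -> square_integrable f),
      M (fun _ => 0),
      (forall (a : R) f g, M f -> M g -> M (fun t => a * f t + g t)) &
      (forall (u_ : nat -> T -> R) (u : T -> R),
          (forall n, M (u_ n)) -> square_integrable u ->
          (fun n => L2dist (u_ n) u) @ \oo --> 0%E -> M u)].

Definition continuous_linear_on (M : set (T -> R)) (theta : (T -> R) -> R) : Prop :=
  (forall (a : R) f g, M f -> M g ->
      theta (fun t => a * f t + g t) = a * theta f + theta g) /\
  (forall (u_ : nat -> T -> R) (u : T -> R),
      (forall n, M (u_ n)) -> M u ->
      (fun n => L2dist (u_ n) u) @ \oo --> 0%E ->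
      (fun n => theta (u_ n)) @ \oo --> theta u).

Definition riesz_representer (M : set (T -> R)) (theta : (T -> R) -> R)
    (psi : T -> R) : Prop :=
  M psi /\ forall u, M u -> (theta u)%:E = (\int[m]_t (u t * psi t)%:E)%E.

End Defs.

(* Let c := theta(yt), which by the Riesz property is E[yt psi] = E[thetahat].
   The generalized Hoelder inequality ||f g||_r <= ||f||_p ||g||_q for
   1/p + 1/q = 1/r (Hoelder for |f|^r and |g|^r with exponents p/r and q/r)
   bounds ||thetahat||_r by ||yt||_p ||psi||_q.  On a probability space
   |E X| <= ||X||_1 <= ||X||_r, so Minkowski gives ||thetahat - c||_r <=
   2 ||thetahat||_r, and the first bound follows by raising to the r-th power.
   For r = 2 the centring costs nothing: E(X - EX)^2 = EX^2 - (EX)^2 <= ||X||_2^2. *)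

From HB Require Import structures.
From mathcomp Require Import all_boot all_order all_algebra.
From mathcomp Require Import all_classical all_reals all_analysis.
From mathcomp Require Import measurable_realfun ess_sup_inf.
Set Implicit Arguments.
Unset Strict Implicit.
Unset Printing Implicit Defensive.

Import Order.TTheory GRing.Theory Num.Theory.
Import numFieldNormedType.Exports.
Local Open Scope classical_set_scope.
Local Open Scope ring_scope.

#[local] Hint Resolve Lnorm_ge0 : core.

Section poweR_extra.
Context {R : realType}.
Local Open Scope ereal_scope.
Implicit Types (x y : \bar R) (r : R).

Lemma poweR_mulrn x n : 0 <= x -> x `^ n%:R = x ^+ n.
Proof.
case: x => [r| |]// r0; first by rewrite poweR_EFin powR_mulrn// EFin_expe.
case: n => [|n]; first by rewrite expe0 poweRe0.
rewrite poweRyr ?pnatr_eq0//.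
elim: n => [|n IH]; first by rewrite expeS expe0 mule1.
by rewrite expeS -IH mulyy.
Qed.

Lemma lee_poweR2r r x y : (0 < r)%R -> 0 <= x -> 0 <= y ->
  (x `^ r <= y `^ r) = (x <= y).
Proof.
move=> r0 x0 y0.
have inI (z : \bar R) : 0 <= z -> z \in `[0, +oo] by rewrite in_itv/= leey andbT.
apply/idP/idP; last exact: (gt0_ler_poweR (ltW r0) (inI _ x0) (inI _ y0)).
have r'0 : (0 <= r^-1)%R by rewrite invr_ge0 ltW.
move/(gt0_ler_poweR r'0 (inI _ (poweR_ge0 _ _)) (inI _ (poweR_ge0 _ _))).
by rewrite -!poweRrM mulfV ?gt_eqF// !poweRe1.
Qed.

Lemma lee_expe2r n x y : 0 <= x -> x <= y -> x ^+ n <= y ^+ n.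
Proof.
move=> x0 xy; elim: n => [|n IH]; first by rewrite !expe0.
by rewrite !expeS lee_pmul// expe_ge0.
Qed.

End poweR_extra.

Section Lnorm_extra.
Context d (T : measurableType d) (R : realType).
Variable mu : {measure set T -> \bar R}.
Local Open Scope ereal_scope.
Local Notation "'N_ p [ f ]" := (Lnorm mu p (EFin \o f)).
Implicit Types (f g h : T -> R) (r : R).

Lemma measurable_powR_norm h r : measurable_fun setT h ->
  measurable_fun setT (fun x => `|h x| `^ r)%R.
Proof.
by move=> mh; apply: measurableT_comp (measurable_powR r) _; exact: measurableT_comp.
Qed.

Lemma powR_Lnorm_EFin h r : r != 0%R ->
  'N_r%:E[h] `^ r = \int[mu]_x (`|h x| `^ r)%:E.
Proof. by move=> r0; rewrite powR_Lnorm. Qed.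

Lemma Lnorm_expe h n : (0 < n)%N ->
  'N_n%:R%:E[h] ^+ n = \int[mu]_x (`|h x| ^+ n)%:E.
Proof.
move=> n0; rewrite -poweR_mulrn// powR_Lnorm_EFin ?pnatr_eq0 -?lt0n//.
by apply: eq_integral => x _; rewrite powR_mulrn.
Qed.

Lemma Lnorm_powR_norm h (a r : R) : (0 < r)%R -> (0 < a)%R ->
  'N_(a / r)%:E[(fun x => `|h x| `^ r)%R] = 'N_a%:E[h] `^ r.
Proof.
move=> r0 a0; rewrite unlock /= -poweRrM; congr poweR.
  apply: eq_integral => x _ /=; congr EFin.
  by rewrite ger0_norm ?powR_ge0// -powRrM mulrCA mulfV ?gt_eqF// mulr1.
by rewrite invf_div mulrC.
Qed.

Lemma Lnorm_ae_eq0 h r : (0 < r)%R -> measurable_fun setT h ->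
  (\forall x \ae mu, h x = 0%R) -> 'N_r%:E[h] = 0.
Proof.
move=> r0 mh h0; apply: (@poweR_eq0_eq0 _ _ r (Lnorm_ge0 _ _ _)).
rewrite powR_Lnorm_EFin ?gt_eqF// (ae_eq_integral (cst 0)) ?integral0//.
- by apply: measurableT_comp => //; exact: measurable_powR_norm.
- by apply: filterS h0 => x /= -> _; rewrite normr0 powR0 ?gt_eqF.
Qed.

Lemma generalized_hoelder_fin f g (r a b : R) :
  measurable_fun setT f -> measurable_fun setT g ->
  (0 < r)%R -> (0 < a)%R -> (0 < b)%R -> (a^-1 + b^-1 = r^-1)%R ->
  'N_r%:E[(f \* g)%R] <= 'N_a%:E[f] * 'N_b%:E[g].
Proof.
move=> mf mg r0 a0 b0 abr.
have conj : ((a / r)^-1 + (b / r)^-1 = 1)%R.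
  by rewrite !invf_div -mulrDr abr mulfV ?gt_eqF.
rewrite -(lee_poweR2r r0) ?mule_ge0// poweRM// -!Lnorm_powR_norm// divff ?gt_eqF//.
under eq_Lnorm => x do rewrite /= normrM powRM//.
exact (hoelder mu (measurable_powR_norm r mf) (measurable_powR_norm r mg)
  (divr_gt0 a0 r0) (divr_gt0 b0 r0) conj).
Qed.

Lemma Lnorm_mul_le_ae_bound f g (s r : R) : (0 < r)%R -> (0 <= s)%R ->
  measurable_fun setT f -> measurable_fun setT g ->
  (\forall x \ae mu, `|f x| <= s)%R -> 'N_r%:E[(f \* g)%R] <= s%:E * 'N_r%:E[g].
Proof.
move=> r0 s0 mf mg fs.
rewrite -(lee_poweR2r r0) ?mule_ge0// poweRM// !powR_Lnorm_EFin ?gt_eqF// poweR_EFin.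
rewrite -ge0_integralZl_EFin ?powR_ge0//; last first.
  by apply: measurableT_comp => //; exact: measurable_powR_norm.
under [leRHS]eq_integral do rewrite -EFinM.
apply: ae_ge0_le_integral => //.
- by apply: measurableT_comp => //; exact/measurable_powR_norm/measurable_funM.
- by move=> x _; rewrite lee_fin mulr_ge0 ?powR_ge0.
- apply: measurableT_comp => //; apply: measurable_funM => //.
  exact: measurable_powR_norm.
apply: filterS fs => x /= fxs _.
rewrite lee_fin -powRM//; apply: (ge0_ler_powR (ltW r0)); rewrite ?nnegrE ?mulr_ge0//.
by rewrite normrM ler_wpM2r.
Qed.

End Lnorm_extra.

Section generalized_hoelder.
Context d (T : measurableType d) (R : realType).
Variable mu : {measure set T -> \bar R}.
Hypothesis mu_gt0 : (0 < mu [set: T])%E.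
Local Open Scope ereal_scope.
Local Notation "'N_ p [ f ]" := (Lnorm mu p (EFin \o f)).
Implicit Types (f g : T -> R) (r : R).

Lemma generalized_hoelder_infty f g r : (0 < r)%R ->
  measurable_fun setT f -> measurable_fun setT g ->
  'N_r%:E[(f \* g)%R] <= 'N_+oo[f] * 'N_r%:E[g].
Proof.
move=> r0 mf mg.
have Ninfty : 'N_+oo[f] = ess_sup mu (abse \o (EFin \o f)).
  by rewrite unlock /= mu_gt0.
have := Lnorm_ge0 mu +oo (EFin \o f); have := ess_sup_ge mu (abse \o (EFin \o f)).
rewrite Ninfty; case: (ess_sup _ _) => [s| |]// fs s0.
  exact: Lnorm_mul_le_ae_bound.
(* [+oo * 0 = 0] in [\bar R], so a null [g] must be handled separately. *)
have [g0|g0] := eqVneq 'N_r%:E[g] 0; last first.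
  by rewrite gt0_mulye ?leey// lt0e g0 Lnorm_ge0.
rewrite g0 mule0 Lnorm_ae_eq0//; first exact: measurable_funM.
have : EFin \o g = \0 %[ae mu].
  by apply: (Lnorm_eq0_eq0 _ _ g0); [exact/measurable_EFinP | rewrite lte_fin].
by apply: filterS => x /= /(_ I) [->]; rewrite mulr0.
Qed.

Lemma generalized_hoelder f g r (p q : \bar R) : (0 < r)%R ->
  measurable_fun setT f -> measurable_fun setT g ->
  1 <= p -> 1 <= q -> p^-1 + q^-1 = (r^-1)%:E ->
  'N_r%:E[(f \* g)%R] <= 'N_p[f] * 'N_q[g].
Proof.
move=> r0 mf mg.
have gt0 (a : R) : (1 <= a%:E) -> (0 < a)%R by rewrite lee_fin; apply: lt_le_trans.
case: p => [a| |]//; case: q => [b| |]// p1 q1.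
- rewrite !inver !gt_eqF ?gt0// => -[abr].
  exact: generalized_hoelder_fin mf mg r0 (gt0 _ p1) (gt0 _ q1) abr.
- rewrite inver gt_eqF ?gt0// invey adde0 => -[/invr_inj ->].
  rewrite muleC (eq_Lnorm _ _ (g := EFin \o (g \* f)%R)) => [|x /=].
    exact: generalized_hoelder_infty.
  by rewrite mulrC.
- rewrite inver gt_eqF ?gt0// invey add0e => -[/invr_inj ->].
  exact: generalized_hoelder_infty.
- by rewrite invey adde0 => -[] /esym/eqP; rewrite invr_eq0 gt_eqF.
Qed.

End generalized_hoelder.

Section probability_Lnorm.
Context d (T : measurableType d) (R : realType).
Variable P : probability T R.
Local Open Scope ereal_scope.
Local Notation "'N_ p [ f ]" := (Lnorm P p (EFin \o f)).
Implicit Types (h : T -> R) (c r : R).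

(* [probability_setT] does not rewrite [P] seen through the measure coercion,
   which is how it occurs inside integrals and norms. *)
Let P_setT : (P : {measure set T -> \bar R}) [set: T] = 1.
Proof. exact: probability_setT. Qed.

Lemma Lnorm_cst c r : (0 < r)%R -> 'N_r%:E[cst c] = `|c|%:E.
Proof.
move=> r0; rewrite unlock /= integral_cst// P_setT mule1 poweR_EFin.
by rewrite -powRrM mulfV ?gt_eqF// powRr1.
Qed.

Lemma Lnorm1_le h r : measurable_fun setT h -> (1 <= r)%R ->
  'N_1[h] <= 'N_r%:E[h].
Proof.
move=> mh; rewrite le_eqVlt => /predU1P[<-//|r1].
have r0 : (0 < r)%R by rewrite (lt_trans ltr01).
pose r' := ((1 - r^-1)^-1)%R.
have r'0 : (0 < r')%R by rewrite invr_gt0 subr_gt0 invf_lt1.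
have conj : (r^-1 + r'^-1 = 1)%R by rewrite invrK addrC subrK.
have := hoelder P mh (measurable_cst (1%R : R)) r0 r'0 conj.
rewrite Lnorm_cst1 P_setT poweR1r mule1.
by under eq_Lnorm do rewrite /= mulr1.
Qed.

Lemma abs_mean_le_Lnorm h c r : measurable_fun setT h -> (1 <= r)%R ->
  c%:E = \int[P]_x (h x)%:E -> `|c|%:E <= 'N_r%:E[h].
Proof.
move=> mh r1 hc; rewrite -abse_EFin hc.
apply: le_trans (le_abse_integral _ _ _) _ => //; first exact/measurable_EFinP.
by rewrite -Lnorm1; exact: Lnorm1_le.
Qed.

Lemma Lnorm_center_le h c r : measurable_fun setT h -> (1 <= r)%R ->
  c%:E = \int[P]_x (h x)%:E -> 'N_r%:E[(h \- cst c)%R] <= 2%:E * 'N_r%:E[h].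
Proof.
move=> mh r1 hc.
have r1E : 1 <= r%:E by rewrite lee_fin.
apply: le_trans (eminkowski P mh (measurable_cst (- c)%R) r1E) _.
rewrite Lnorm_cst ?(lt_le_trans ltr01)// normrN mule_natl mule2n.
by apply: leeD => //; exact: abs_mean_le_Lnorm.
Qed.

Lemma integral_sqr_center_le h c : measurable_fun setT h ->
  c%:E = \int[P]_x (h x)%:E -> \int[P]_x ((h x - c) ^+ 2)%:E <= 'N_2%:E[h] ^+ 2.
Proof.
move=> mh hc.
have [h2|] := ltP 'N_2%:E[h] +oo; last first.
  by rewrite leye_eq => /eqP ->; rewrite expe2 mulyy leey.
have Lh : h \in Lfun P 2%:E by rewrite inE/=; apply/andP; split; rewrite inE.
have -> : 'N_2%:E[h] ^+ 2 = \int[P]_x (h x ^+ 2)%:E.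
  by rewrite Lnorm_expe//; apply: eq_integral => x _; rewrite real_normK ?num_real.
move: (varianceE Lh); rewrite /variance !unlock -hc /= => var_h.
have -> : \int[P]_x ((h x - c) ^+ 2)%:E = \int[P]_x (h x ^+ 2)%:E + (- c ^+ 2)%:E.
  exact: var_h.
by rewrite geeDl// lee_fin oppr_le0 sqr_ge0.
Qed.

End probability_Lnorm.

Theorem lemma2 (R : realType)
  (dZ dO dX dE : measure_display)
  (Z : measurableType dZ) (Omega : measurableType dO)
  (X : measurableType dX) (Eps : measurableType dE)
  (mu : probability Z R) (P : probability Omega R)
  (y : Z -> X -> Eps -> R) (x : Omega -> X) (eps : Omega -> Eps)
  (M : set (Z * Omega -> R)) (theta : (Z * Omega -> R) -> R)
  (psi : Z * Omega -> R) :
  let m := (mu \x P)%E in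
  let yt := fun zw : Z * Omega => y zw.1 (x zw.2) (eps zw.2) in
  let thetahat := fun zw : Z * Omega => yt zw * psi zw in
  measurable_fun setT (fun t : Z * (X * Eps) => y t.1 t.2.1 t.2.2) ->
  measurable_fun setT x -> measurable_fun setT eps ->
  closed_L2_subspace m M ->
  M yt ->
  continuous_linear_on m M theta ->
  riesz_representer m M theta psi ->
  (forall (r : nat) (p q : \bar R),
      (1 <= r)%N -> (1 <= p)%E -> (1 <= q)%E ->
      (p^-1 + q^-1 = (r%:R^-1)%:E)%E ->
      m.-integrable setT (fun zw => (`|thetahat zw - theta yt| ^+ r)%:E) ->
      (\int[m]_zw (`|thetahat zw - theta yt| ^+ r)%:E
         <= (2%:E * Lnorm m p (EFin \o yt) * Lnorm m q (EFin \o psi)) ^+ r)%E) /\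
  (forall (p q : \bar R),
      (1 <= p)%E -> (1 <= q)%E ->
      (p^-1 + q^-1 = (2^-1)%:E)%E ->
      m.-integrable setT (fun zw => ((thetahat zw - theta yt) ^+ 2)%:E) ->
      (\int[m]_zw ((thetahat zw - theta yt) ^+ 2)%:E
         <= (Lnorm m p (EFin \o yt)) ^+ 2 * (Lnorm m q (EFin \o psi)) ^+ 2)%E).
Proof.
move=> m yt thetahat _ _ _ [M_L2 _ _ _] Myt _ [Mpsi riesz].
have [myt _] := M_L2 _ Myt.
have [mpsi _] := M_L2 _ Mpsi.
have mth : measurable_fun setT thetahat by exact: measurable_funM.
have mean : (theta yt)%:E = (\int[m]_zw (thetahat zw)%:E)%E by exact: riesz.
have m_gt0 : (0 < m [set: Z * Omega])%E.
  by rewrite (_ : m _ = 1%E) ?lte01//; exact: probability_setT.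
have expe2M (a b : \bar R) : ((a * b) ^+ 2 = a ^+ 2 * b ^+ 2)%E.
  by rewrite !expe2 muleACA.
split=> [r p q r1 p1 q1 pqr _ | p q p1 q1 pq2 _].
- have r0 : (0 < r%:R :> R)%R by rewrite ltr0n.
  rewrite -Lnorm_expe// -muleA; apply: lee_expe2r => //.
  apply: le_trans (Lnorm_center_le mth _ mean) _; first by rewrite ler1n.
  by apply: lee_wpmul2l => //; exact: generalized_hoelder.
- apply: le_trans (integral_sqr_center_le mth mean) _.
  rewrite -expe2M; apply: lee_expe2r => //.
  exact: generalized_hoelder.
Qed.
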